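(* Let $H$ be a Hilbert space with orthonormal system $\{e_m\}_{m\ge1}$. For $n\in\mathbb N$ let $k_n:=[\sqrt n]$ and let $g_p(n)$, $p=1,\dots,2^{k_n}$, be the vertices of the unit cube in $\operatorname{span}\{e_{2(n+1)},\dots,e_{2(n+k_n)}\}$, i.e. all vectors $\sum_{j=1}^{k_n}a_je_{2(n+j)}$ with $a_j\in\{0,1\}$. Let $\gamma>0$ and let $(\varepsilon_n)$ be positive numbers with $ce^{-\gamma n^2}\le\varepsilon_n\le Ce^{-\gamma n^2}$ for some constants $0<c\le C$. Let $\mathcal B\subset H$ be a compact set such that $\varepsilon_ng_p(n)\in\mathcal B$ for all $n\ge n_0$ (some $n_0$) and all $p=1,\dots,2^{k_n}$. Then the log-doubling factor of $\mathcal B$ is infinite, i.e. $\dim_{Log-D}(\mathcal B)=\infty$.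
   Context: For a compact metric space $X$ and $B\subset X$, $N_\varepsilon(B,X)$ is the minimal number of $\varepsilon$-balls of $X$ covering $B$; $D_\varepsilon(X):=\sup_{x\in X}N_{\varepsilon/2}(B(\varepsilon,x),X)$ where $B(r,x)$ is the ball of radius $r$ in $X$ centered at $x$; and $\dim_{Log-D}(X):=\limsup_{\varepsilon\to0}\frac{\log D_\varepsilon(X)}{\log\log(1/\varepsilon)}$. *)

From HB Require Import structures.
From mathcomp Require Import all_boot all_order all_algebra.
From mathcomp Require Import all_classical all_reals all_analysis.
From Stdlib Require Import PeanoNat.
Set Implicit Arguments. Unset Strict Implicit. Unset Printing Implicit Defensive.
Import Order.TTheory GRing.Theory Num.Theory.
Import numFieldNormedType.Exports.
Local Open Scope classical_set_scope.
Local Open Scope ring_scope.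

Section LogDoubling.
Variables (R : realType) (V : pseudoMetricType R).

Definition covers (X A : set V) (r : R) (s : seq V) : Prop :=
  (forall x, x \in s -> X x) /\ (forall y, A y -> exists2 x, x \in s & ball x r y).

Definition cover_num (r : R) (A X : set V) : \bar R :=
  ereal_inf [set ((size s)%:R)%:E | s in [set s | covers X A r s]].

Definition ballX (X : set V) (r : R) (x : V) : set V := X `&` ball x r.

Definition doubling (X : set V) (eps : R) : \bar R :=
  ereal_sup [set cover_num (eps / 2) (ballX X eps x) X | x in X].

Definition logD_ratio (X : set V) (eps : R) : \bar R :=
  if doubling X eps is +oo%E then +oo%E
  else (ln (fine (doubling X eps)) / ln (ln eps^-1))%:E.

(** dim_{Log-D}(X) := limsup_{eps -> 0+} log D_eps(X) / log log (1/eps) *)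
Definition dimLogD (X : set V) : \bar R :=
  ereal_inf [set ereal_sup [set logD_ratio X eps | eps in [set eps | 0 < eps < d]]
            | d in [set d : R | 0 < d]].

End LogDoubling.

(** real inner product inducing the norm of V (V complete = Hilbert space) *)
Definition is_inner_product (R : realType) (V : normedModType R)
    (inner : V -> V -> R) : Prop :=
  [/\ forall x y, inner x y = inner y x,
      forall a x y z, inner (a *: x + y) z = a * inner x z + inner y z
    & forall x, `|x| = Num.sqrt (inner x x)].

Definition kn (n : nat) : nat := Nat.sqrt n.

Definition cube_vertex (R : realType) (V : normedModType R) (e : nat -> V)
    (n : nat) (a : 'I_(kn n) -> bool) : V :=
  \sum_(j < kn n) (a j)%:R *: e (2 * (n + j.+1))%N.

From HB Require Import structures.
From mathcomp Require Import all_boot all_order all_algebra.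
From mathcomp Require Import all_classical all_reals all_analysis.
From mathcomp Require Import zify ring lra.
Set Implicit Arguments. Unset Strict Implicit. Unset Printing Implicit Defensive.
Import Order.TTheory GRing.Theory Num.Theory.
Local Open Scope classical_set_scope.
Local Open Scope ring_scope.

(* Binary codes give many well-separated cube vertices. Fix q with (q+1)/5 > M,
   w = 2q+1, a large prime p and n = (wp)^2, so that k_n = wp and the
   coordinates of the cube can be indexed by 'I_w x F_p. A polynomial of degree <= q over F_p is sent to
   the one-hot encoding of its values at w points (a Reed-Solomon code): the
   p^(q+1) codewords have Hamming weight w and, as two such polynomials agree at
   <= q points, pairwise distance >= 2q+2. Scaled by eps_n, they all lie within
   r = eps_n sqrt(2q+2) of the zero vertex and are r-separated, hence
   D_r(B) >= p^(q+1). As eps_n is of order exp(-gamma (wp)^4),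
   log log (1/r) <= 5 log p for p large, so the ratio defining dim_{Log-D} is at
   least (q+1)/5 > M at arbitrarily small scales r. *)

Definition hamming (I : finType) (T : eqType) (a b : I -> T) : nat :=
  #|[pred i | a i != b i]|.

Lemma sum_boolE (I : finType) (P : pred I) : (\sum_i P i)%N = #|P|.
Proof.
by rewrite -sum1_card [RHS]big_mkcond; apply: eq_bigr => i _; rewrite unfold_in; case: (P i).
Qed.

Lemma hammingE (I : finType) (T : eqType) (a b : I -> T) :
  hamming a b = (\sum_i (a i != b i))%N.
Proof. by rewrite sum_boolE. Qed.

Lemma hamming_comp (I J : finType) (T : eqType) (g : J -> I) (a b : I -> T) :
  bijective g -> hamming (a \o g) (b \o g) = hamming a b.
Proof.
by move=> g_bij; rewrite !hammingE (reindex g) //; apply: onW_bij.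
Qed.

Section OneHot.
Variables (I A : finType).

Definition onehot (alpha : I -> A) (x : I * A) : bool := alpha x.1 == x.2.

Lemma sum_onehot (a : A) : (\sum_(b : A) (a == b))%N = 1%N.
Proof. by rewrite sum_boolE -(card1 a); apply: eq_card => b; rewrite !inE eq_sym. Qed.

Lemma hamming_onehot0 (alpha : I -> A) :
  hamming (onehot alpha) (fun=> false) = #|I|.
Proof.
rewrite hammingE -(pair_bigA _ (fun i a => (onehot alpha (i, a) != false : nat))).
rewrite -sum1_card; apply: eq_bigr => i _.
rewrite -(sum_onehot (alpha i)); apply: eq_bigr => a _.
by rewrite /onehot /=; case: (alpha i == a).
Qed.

Lemma hamming_onehot (alpha beta : I -> A) :
  hamming (onehot alpha) (onehot beta) = (2 * hamming alpha beta)%N.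
Proof.
rewrite !hammingE big_distrr.
rewrite -(pair_bigA _ (fun i a => (onehot alpha (i, a) != onehot beta (i, a) : nat))).
apply: eq_bigr => i _.
rewrite /onehot /=; have [->|ne] := eqVneq (alpha i) (beta i).
  by rewrite big1 // => a _; rewrite eqxx.
rewrite (eq_bigr (fun a => (alpha i == a) + (beta i == a))%N); last first.
  move=> a _; case: (eqVneq (alpha i) a) => [<-|_].
    by rewrite [beta i == _]eq_sym (negPf ne).
  by case: (beta i == a).
by rewrite big_split /= !sum_onehot.
Qed.

End OneHot.

Lemma card_roots_lt_size (F : idomainType) (I : finType) (x : I -> F)
    (P : {poly F}) :
  injective x -> P != 0 -> (#|[pred i | root P (x i)]| < size P)%N.
Proof.
move=> x_inj P_neq0; rewrite cardE -(size_map x).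
apply: (max_poly_roots P_neq0); last by rewrite map_inj_uniq ?enum_uniq.
by apply/allP => y /mapP [i]; rewrite mem_enum => root_i ->.
Qed.

Section ReedSolomon.
Variables (F : fieldType) (w h : nat) (x : 'I_w -> F).
Hypothesis x_inj : injective x.

Definition rs_word (v : 'rV[F]_h) (i : 'I_w) : F := (rVpoly v).[x i].

Lemma hamming_rs_word (v v' : 'rV[F]_h) :
  v != v' -> (w < hamming (rs_word v) (rs_word v') + h)%N.
Proof.
move=> neq_vv'; set P := rVpoly (v - v').
have P_neq0 : P != 0.
  apply: contraNneq neq_vv' => /(congr1 (@poly_rV _ h)).
  by rewrite rVpolyK raddf0 => /eqP; rewrite subr_eq0.
have size_P : (size P <= h)%N by rewrite /P /rVpoly size_poly.
have := cardC [pred i | rs_word v i != rs_word v' i]; rewrite card_ord => card_w.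
have agree_lt : (#|[predC [pred i | rs_word v i != rs_word v' i]]| < h)%N.
  rewrite (@eq_card _ _ [pred i | root P (x i)]) => [|i].
    exact: leq_trans (card_roots_lt_size x_inj P_neq0) size_P.
  by rewrite !inE negbK /root /P linearB /= hornerD hornerN subr_eq0.
by rewrite -[X in (X < _)%N]card_w ltn_add2l.
Qed.

End ReedSolomon.

Section CubeCode.
Variables (F : finFieldType) (q K : nat).
Local Notation w := q.*2.+1.
Hypothesis w_le_F : (w <= #|F|)%N.
Variable (g : 'I_K -> 'I_w * F).
Hypothesis g_bij : bijective g.

Definition rs_point (i : 'I_w) : F := enum_val (widen_ord w_le_F i).

Lemma rs_point_inj : injective rs_point.
Proof. by move=> i j /enum_val_inj/(congr1 val) /= /val_inj. Qed.

Definition cube_code (v : 'rV[F]_q.+1) : 'I_K -> bool :=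
  onehot (rs_word rs_point v) \o g.

Lemma hamming_cube_code0 v : hamming (cube_code v) (fun=> false) = w.
Proof.
by rewrite -[fun=> false]/((fun=> false) \o g) hamming_comp // hamming_onehot0 card_ord.
Qed.

Lemma hamming_cube_code v v' :
  v != v' -> (q.*2.+2 <= hamming (cube_code v) (cube_code v'))%N.
Proof.
move=> neq_vv'; rewrite hamming_comp // hamming_onehot.
have := hamming_rs_word rs_point_inj neq_vv'; move: (hamming _ _) => d.
by rewrite mul2n -!addnn; lia.
Qed.

End CubeCode.

Section Packing.
Variables (R : realType) (V : normedModType R).

Lemma separated_card_le_cover_size (T : finType) (f : T -> V) (X A : set V)
    (r : R) (s : seq V) :
  (forall t, A (f t)) -> (forall t u, t != u -> r <= `|f t - f u|) ->
  covers X A (r / 2) s -> (#|T| <= size s)%N.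
Proof.
move=> fA f_sep [_ s_cov].
have /choice [center center_s] : forall t, exists x, x \in s /\ ball x (r / 2) (f t).
  by move=> t; have [x xs ball_x] := s_cov _ (fA t); exists x.
have center_inj : injective center.
  move=> t u center_tu; apply: (@contraTeq _ (`|f t - f u| < r)).
    by move=> /f_sep; rewrite leNgt.
  have [_] := center_s t; have [_] := center_s u; rewrite -!ball_normE /= center_tu.
  move=> ball_u ball_t; rewrite (le_lt_trans (ler_distD (center u) _ _)) //.
  by rewrite (splitr r) distrC ltrD.
rewrite cardE -(size_map center) uniq_leq_size ?(map_inj_uniq center_inj) ?enum_uniq //.
by move=> _ /mapP [t _ ->]; have [] := center_s t.
Qed.

Lemma separated_card_le_cover_num (T : finType) (f : T -> V) (X A : set V) (r : R) :
  (forall t, A (f t)) -> (forall t u, t != u -> r <= `|f t - f u|) ->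
  ((#|T|%:R)%:E <= cover_num (r / 2) A X)%E.
Proof.
move=> fA f_sep; apply: le_ereal_inf_tmp => _ [s s_cov <-].
by rewrite lee_fin ler_nat (separated_card_le_cover_size fA f_sep s_cov).
Qed.

Lemma separated_card_le_doubling (T : finType) (f : T -> V) (X : set V) (x0 : V) (r : R) :
  X x0 -> (forall t, X (f t)) -> (forall t, `|x0 - f t| < r) ->
  (forall t u, t != u -> r <= `|f t - f u|) ->
  ((#|T|%:R)%:E <= doubling X r)%E.
Proof.
move=> Xx0 Xf f_near f_sep; apply: le_trans (ereal_sup_ubound _); last by exists x0.
apply: separated_card_le_cover_num f_sep => t; split=> //.
by rewrite -ball_normE; apply: f_near.
Qed.

End Packing.

Section Orthonormal.
Variables (R : realType) (V : normedModType R) (inner : V -> V -> R).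
Hypothesis inner_prod : is_inner_product inner.

Lemma inner0l z : inner 0 z = 0.
Proof.
have [_ innerDZl _] := inner_prod.
have := innerDZl 1 0 0 z; rewrite scaler0 addr0 mul1r => inner00.
by apply: (addrI (inner 0 z)); rewrite addr0 -inner00.
Qed.

Lemma inner_suml (I : finType) (a : I -> R) (v : I -> V) z :
  inner (\sum_i a i *: v i) z = \sum_i a i * inner (v i) z.
Proof.
have [_ innerDZl _] := inner_prod.
by elim/big_rec2: _ => [|i y1 y2 _ <-]; [exact: inner0l | rewrite innerDZl].
Qed.

Variable e : nat -> V.
Hypothesis e_orthonormal : forall i j, (1 <= i)%N -> (1 <= j)%N ->
  inner (e i) (e j) = (if i == j then 1 else 0).

Lemma norm_sum_orthonormal (I : finType) (a : I -> R) (s : I -> nat) :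
  injective s -> (forall i, 1 <= s i)%N ->
  `|\sum_i a i *: e (s i)| = Num.sqrt (\sum_i a i ^+ 2).
Proof.
move=> s_inj s_ge1; have [inner_sym _ ->] := inner_prod; congr Num.sqrt.
rewrite inner_suml; apply: eq_bigr => i _.
rewrite inner_sym inner_suml (bigD1 i) //= e_orthonormal // eqxx mulr1 big1 ?addr0 ?expr2 //.
by move=> j /negbTE neq_ji; rewrite e_orthonormal // (inj_eq s_inj) neq_ji mulr0.
Qed.

Lemma norm_cube_vertexB n (a b : 'I_(kn n) -> bool) :
  `|cube_vertex e a - cube_vertex e b| = Num.sqrt (hamming a b)%:R.
Proof.
rewrite /cube_vertex -sumrB; under eq_bigr do rewrite -scalerBl.
rewrite norm_sum_orthonormal => [||j]; last by lia.
  rewrite hammingE natr_sum; congr Num.sqrt; apply: eq_bigr => j _.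
  by case: (a j); case: (b j); rewrite /= ?subrr ?subr0 ?sub0r ?sqrrN ?expr1n ?expr0n.
by move=> i j /= ij; apply: ord_inj; lia.
Qed.

Lemma code_card_le_doubling (B : set V) n (eps : R) (T : finType)
    (code : T -> 'I_(kn n) -> bool) (d : nat) :
  0 < eps -> (forall a : 'I_(kn n) -> bool, B (eps *: cube_vertex e a)) ->
  (forall t, hamming (code t) (fun=> false) < d)%N ->
  (forall t u, t != u -> d <= hamming (code t) (code u))%N ->
  ((#|T|%:R)%:E <= doubling B (eps * Num.sqrt d%:R))%E.
Proof.
move=> eps_gt0 B_cube weight_lt dist_ge.
have distE (a b : 'I_(kn n) -> bool) :
    `|eps *: cube_vertex e a - eps *: cube_vertex e b| = eps * Num.sqrt (hamming a b)%:R.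
  by rewrite -scalerBr normrZ gtr0_norm // norm_cube_vertexB.
apply: (separated_card_le_doubling (x0 := eps *: cube_vertex e (fun=> false))
    (f := fun t => eps *: cube_vertex e (code t))) => // [t|t u neq_tu].
  rewrite distrC distE ltr_pM2l // ltr_sqrt ?ltr_nat //.
  by rewrite ltr0n (leq_ltn_trans _ (weight_lt t)).
by rewrite distE ler_pM2l // ler_sqrt // ler_nat dist_ge.
Qed.

Lemma rs_cube_card_le_doubling (F : finFieldType) (q : nat) (B : set V) n (eps : R) :
  (q.*2.+1 <= #|F|)%N -> kn n = (q.*2.+1 * #|F|)%N -> 0 < eps ->
  (forall a : 'I_(kn n) -> bool, B (eps *: cube_vertex e a)) ->
  ((((#|F| ^ q.+1)%N)%:R)%:E <= doubling B (eps * Num.sqrt (q.*2.+2)%:R))%E.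
Proof.
move=> w_le_F kE eps_gt0 B_cube.
have kE' : kn n = #|{: 'I_q.*2.+1 * F}| by rewrite card_prod card_ord.
have g_bij : bijective (enum_val \o cast_ord kE').
  exact: bij_comp (enum_val_bij _) (Bijective (cast_ordK kE') (cast_ordKV kE')).
rewrite -[(q.+1)%N]mul1n -card_mx.
apply: (code_card_le_doubling (code := cube_code w_le_F (enum_val \o cast_ord kE'))) => //.
  by move=> v; rewrite hamming_cube_code0.
exact: hamming_cube_code.
Qed.
End Orthonormal.

Section LogDoublingBounds.
Variables (R : realType) (V : pseudoMetricType R).

Lemma dimLogD_pinfty (X : set V) :
  (forall M d : R, 0 < d -> exists2 r, 0 < r < d & (M%:E <= logD_ratio X r)%E) ->
  dimLogD X = +oo%E.
Proof.
move=> ratio_large; apply/ereal_inf_pinfty => _ [d d_gt0 <-]; apply/eq_infty => M.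
have [r r_in M_le] := ratio_large M d d_gt0.
by apply: le_trans M_le (ereal_sup_ubound _); exists r.
Qed.

Lemma logD_ratio_ge (X : set V) (r x : R) (k b : nat) :
  1 < x -> 0 < ln (ln r^-1) -> ln (ln r^-1) <= ln x *+ b ->
  ((x ^+ k)%:E <= doubling X r)%E -> ((k%:R / b%:R)%:E <= logD_ratio X r)%E.
Proof.
rewrite /logD_ratio => x_gt1 lnln_gt0 lnln_le.
case: (doubling X r) => [D| |] //=; last by move=> _; exact: leey.
rewrite lee_fin => xk_le_D.
have lnx_gt0 : 0 < ln x by apply: ln_gt0.
have x_gt0 : 0 < x by apply: lt_trans x_gt1.
have lnxb_gt0 : 0 < ln x *+ b by apply: lt_le_trans lnln_le.
have -> : k%:R / b%:R = ln (x ^+ k) / (ln x *+ b).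
  rewrite lnXn // -[ln x *+ k]mulr_natr -[ln x *+ b]mulr_natr invfM mulrACA.
  by rewrite divff ?gt_eqF // mul1r.
apply: (@le_trans _ _ (ln (x ^+ k) / ln (ln r^-1))).
  by rewrite ler_wpM2l ?lef_pV2 ?posrE // lnXn // mulrn_wge0 // ltW.
rewrite ler_pM2r ?invr_gt0 // ler_ln ?posrE ?exprn_gt0 //.
by apply: lt_le_trans xk_le_D; rewrite exprn_gt0.
Qed.

End LogDoublingBounds.

Lemma gauss_tail_lt (R : realType) (gamma A delta : R) :
  0 < gamma -> 0 < delta ->
  exists m : nat, forall n, (m <= n)%N -> A * expR (- gamma * n%:R ^+ 2) < delta.
Proof.
move=> gamma_gt0 delta_gt0; exists (Num.truncn (A / (gamma * delta))).+1 => n m_le_n.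
set N : R := n%:R.
have A_lt : A < N * (gamma * delta).
  rewrite -ltr_pdivrMr ?mulr_gt0 //.
  by apply: lt_le_trans (truncnS_gt _) _; rewrite ler_nat.
have N_ge1 : 1 <= N by rewrite ler1n (leq_trans _ m_le_n).
have N_le_N2 : gamma * delta * N <= gamma * delta * N ^+ 2.
  by apply: ler_wpM2l; [rewrite mulr_ge0 // ltW | rewrite expr2 ler_peMl // (le_trans ler01)].
have E_ge := expR_ge1Dx (gamma * N ^+ 2).
rewrite mulNr expRN ltr_pdivrMr ?expR_gt0 //; nra.
Qed.

Lemma ln_inv_gt1 (R : realType) (r : R) : 0 < r -> r < expR (-1) -> 1 < ln r^-1.
Proof.
move=> r_gt0 r_lt; rewrite -[1]expRK ltr_ln ?posrE ?invr_gt0 ?expR_gt0 //.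
by rewrite -[expR 1]invrK -expRN ltf_pV2 ?posrE ?expR_gt0.
Qed.

Lemma ln_invr_le (R : realType) (c x y : R) :
  0 < c -> c * expR (- y) <= x -> ln x^-1 <= y + `|ln c|.
Proof.
move=> c_gt0 x_ge; have x_gt0 : 0 < x by apply: lt_le_trans x_ge; rewrite mulr_gt0 ?expR_gt0.
rewrite lnV ?posrE //.
have := ler_ln (mulr_gt0 c_gt0 (expR_gt0 (- y))) x_gt0; rewrite x_ge.
rewrite lnM ?posrE ?expR_gt0 // expRK => /esym lnx_ge.
have := ler_norm (- ln c); rewrite normrN; lra.
Qed.

Section GaussianScales.
Variables (R : realType) (gamma c C : R) (eps : nat -> R).
Hypotheses (gamma_gt0 : 0 < gamma) (c_gt0 : 0 < c).
Hypothesis eps_gt0 : forall n : nat, 0 < eps n.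
Hypothesis eps_bounds : forall n : nat,
  c * expR (- gamma * (n%:R ^+ 2)) <= eps n /\ eps n <= C * expR (- gamma * (n%:R ^+ 2)).

Lemma eps_scale_lt (s delta : R) : 0 <= s -> 0 < delta ->
  exists m : nat, forall n, (m <= n)%N -> eps n * s < delta.
Proof.
move=> s_ge0 delta_gt0; have [m tail_lt] := gauss_tail_lt (C * s) gamma_gt0 delta_gt0.
exists m => n m_le_n; apply: le_lt_trans (tail_lt n m_le_n).
by rewrite mulrAC ler_wpM2r //; case: (eps_bounds n).
Qed.

Lemma lnln_inv_eps_scale_le (w p : nat) (s : R) : 1 <= s ->
  0 < ln (eps ((w * p) * (w * p)) * s)^-1 ->
  gamma * w%:R ^+ 4 + `|ln c| < p%:R ->
  ln (ln (eps ((w * p) * (w * p)) * s)^-1) <= ln p%:R *+ 5.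
Proof.
set n := ((w * p) * (w * p))%N; set P : R := p%:R; set K := `|ln c|.
move=> s_ge1 lnr_gt0 p_gt.
have K_ge0 : 0 <= K by apply: normr_ge0.
have P_ge1 : 1 <= P.
  by rewrite ler1n -(ltr0n R); apply: le_lt_trans p_gt; rewrite addr_ge0 // mulr_ge0 // ltW.
have lnr_le : ln (eps n * s)^-1 <= gamma * n%:R ^+ 2 + K.
  apply: ln_invr_le c_gt0 _; rewrite -mulNr; apply: le_trans (proj1 (eps_bounds n)) _.
  by rewrite ler_peMr // ltW.
have nP : (n%:R : R) ^+ 2 = w%:R ^+ 4 * P ^+ 4 by rewrite /n !natrM; ring.
have P5 : gamma * n%:R ^+ 2 + K <= P ^+ 5.
  have P4_ge1 : 1 <= P ^+ 4 by rewrite exprn_ege1.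
  have W4_ge0 : 0 <= (w%:R : R) ^+ 4 by rewrite exprn_ge0.
  rewrite nP [P ^+ 5]exprS; move: P4_ge1 W4_ge0 p_gt.
  by move: (P ^+ 4) ((w%:R : R) ^+ 4) => Y W Y_ge1 W_ge0 P_gt; nra.
have P_gt0 : 0 < P by apply: lt_le_trans ltr01 P_ge1.
rewrite -lnXn // ler_ln ?posrE ?exprn_gt0 //.
exact: le_trans lnr_le P5.
Qed.

End GaussianScales.

Lemma kn_square k : kn (k * k) = k.
Proof. exact: PeanoNat.Nat.sqrt_square. Qed.

Theorem lemma3p4 (R : realType) (H : completeNormedModType R)
  (inner : H -> H -> R) (e : nat -> H)
  (gamma c C : R) (eps : nat -> R) (B : set H) (n0 : nat) :
  is_inner_product inner ->
  (forall i j : nat, (1 <= i)%N -> (1 <= j)%N ->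
     inner (e i) (e j) = (if i == j then 1 else 0)) ->
  0 < gamma -> 0 < c -> c <= C ->
  (forall n : nat, 0 < eps n) ->
  (forall n : nat, c * expR (- gamma * (n%:R ^+ 2)) <= eps n
                   /\ eps n <= C * expR (- gamma * (n%:R ^+ 2))) ->
  compact B ->
  (forall n : nat, (n0 <= n)%N ->
     forall a : 'I_(kn n) -> bool, B (eps n *: cube_vertex e a)) ->
  dimLogD B = +oo%E.
Proof.
move=> inner_prod e_orthonormal gamma_gt0 c_gt0 _ eps_gt0 eps_bounds _ B_cube.
apply: dimLogD_pinfty => M d d_gt0.
pose q := Num.truncn (5 * M); pose w := q.*2.+1; pose s : R := Num.sqrt (q.*2.+2)%:R.
have s_ge1 : 1 <= s by rewrite -sqrtr1 ler_sqrt // ler1n.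
have [m eps_s_lt] : exists m, forall n, (m <= n)%N -> eps n * s < Num.min d (expR (-1)).
  apply: (eps_scale_lt gamma_gt0 eps_bounds); first exact: le_trans ler01 s_ge1.
  by rewrite lt_min d_gt0 expR_gt0.
pose K := Num.truncn (gamma * w%:R ^+ 4 + `|ln c|).
have [p] := prime_above (maxn (maxn n0 m) (maxn w K)).
rewrite !gtn_max => /andP[/andP[n0_lt m_lt] /andP[w_lt K_lt]] p_prime.
pose n := ((w * p) * (w * p))%N.
have [n0_le m_le] : (n0 <= n)%N /\ (m <= n)%N.
  by have := prime_gt0 p_prime; have : (0 < w)%N by []; rewrite /n; nia.
set r := eps n * s.
have /andP[r_lt_d r_lt_e] : (r < d) && (r < expR (-1)) by rewrite -lt_min eps_s_lt.
have r_gt0 : 0 < r by rewrite mulr_gt0 // (lt_le_trans ltr01).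
have lnr_gt1 : 1 < ln r^-1 by apply: ln_inv_gt1.
have := rs_cube_card_le_doubling inner_prod e_orthonormal (F := 'F_p) (q := q) _ _
  (eps_gt0 n) (B_cube n n0_le).
rewrite card_Fp // natrX kn_square => /(_ (ltnW w_lt) erefl) D_ge.
exists r; first by rewrite r_gt0.
apply: le_trans (logD_ratio_ge (k := q.+1) (b := 5) _ (ln_gt0 lnr_gt1) _ D_ge).
- by rewrite lee_fin ler_pdivlMr //; have := truncnS_gt (5 * M); rewrite -/q; lra.
- by rewrite ltr1n prime_gt1.
apply: lnln_inv_eps_scale_le gamma_gt0 c_gt0 eps_gt0 eps_bounds _ _ _ s_ge1 _ _.
  exact: lt_trans ltr01 lnr_gt1.
by apply: lt_le_trans (truncnS_gt _) _; rewrite ler_nat.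
Qed.
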